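(* For every integer $n\ge 1$, the resistance distance in the ladder graph $L_n$ (unit edge resistances) satisfies \[ r_{L_n}(1,2)=r_{L_n}(2n-1,2n)=\frac{(2+\sqrt3)^n(\sqrt3-1)+(2-\sqrt3)^n(\sqrt3+1)}{(2+\sqrt3)^n-(2-\sqrt3)^n}. \]
   Context: The ladder graph $L_n$ has vertex set $\{1,\dots,2n\}$ and edges $\{2k-1,2k\}$ for $k=1,\dots,n$, together with $\{2k-1,2k+1\}$ and $\{2k,2k+2\}$ for $k=1,\dots,n-1$; each edge has resistance $1$. The resistance distance $r_G(u,v)$ is the potential difference between $u$ and $v$ when one unit of current enters at $u$ and leaves at $v$; equivalently $r_G(u,v)=(\mathbf e_u-\mathbf e_v)^T L^\dagger(\mathbf e_u-\mathbf e_v)$ with $L$ the combinatorial Laplacian of $G$. *)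

From HB Require Import structures.
From mathcomp Require Import all_boot all_order all_algebra.
Set Implicit Arguments. Unset Strict Implicit. Unset Printing Implicit Defensive.
Import Order.TTheory GRing.Theory Num.Theory.
Local Open Scope ring_scope.

(* Vertices of L_n are 'I_(2*n); the ordinal i represents vertex label i+1,
   so labels range over {1,...,2n} as in the paper. *)

Definition is_pair (u v a b : nat) : bool :=
  ((u == a) && (v == b)) || ((u == b) && (v == a)).

Definition ladder_adj (n : nat) (i j : 'I_(2 * n)) : bool :=
  let u := i.+1 in let v := j.+1 in
  [exists k : 'I_n, let k' := k.+1 in
     [|| is_pair u v (2 * k').-1 (2 * k'),
         (k' < n)%N && is_pair u v (2 * k').-1 (2 * k').+1
       | (k' < n)%N && is_pair u v (2 * k') (2 * k').+2]].

Definition ladder_lap (R : numDomainType) (n : nat) : 'M[R]_(2 * n) :=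
  \matrix_(i, j)
    (if i == j then (#|[set k | ladder_adj i k]|)%:R
     else - (ladder_adj i j)%:R).

Definition evec (R : numDomainType) (m : nat) (u : 'I_m) : 'cV[R]_m :=
  \col_k (u == k)%:R.

(* r_{L_n}(u,v) = r : when a unit current enters at u and leaves at v
   (i.e. potentials x with L x = e_u - e_v, which exist), the potential
   difference x_u - x_v equals r (for every such potential vector x). *)
Definition ladder_resistance (R : numDomainType) (n : nat) (u v : 'I_(2 * n))
    (r : R) : Prop :=
  (exists x : 'cV[R]_(2 * n), ladder_lap R n *m x = evec R u - evec R v) /\
  (forall x : 'cV[R]_(2 * n),
     ladder_lap R n *m x = evec R u - evec R v -> x u 0 - x v 0 = r).

From HB Require Import structures.
From mathcomp Require Import all_boot all_order all_algebra zify ring lra.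
Set Implicit Arguments. Unset Strict Implicit. Unset Printing Implicit Defensive.
Import Order.TTheory GRing.Theory Num.Theory.
Local Open Scope ring_scope.

(* Index the vertices by 0..2n-1, so rung m joins 2m and 2m+1.  By the
   left/right symmetry of the ladder, a unit current through rung c is carried
   by an antisymmetric potential x_(2m) = F m, x_(2m+1) = - F m, and the
   Laplace equation L x = e_(2c) - e_(2c+1) reduces to the second-order
   recurrence  2 F m + (path Laplacian of F) m = [m = c]  on 0..n-1
   ([path_op] below); the resistance is then 2 F c.
   For c = n-1 this recurrence is solved by F = Q / (2 (a^n - b^n)), where
   Q k = (s+1) a^k + (s-1) b^k, s = sqrt 3, a = 2+s, b = 2-s, and a, b are the
   roots of t^2 = 4t - 1; reversing the index handles c = 0.  Uniqueness of
   the potential difference along an edge follows from the Dirichlet energy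
   argument: a harmonic potential is constant across every edge. *)

Lemma sum_delta (R : numDomainType) (m c : nat) (h : nat -> R) :
  \sum_(j < m) ((j : nat) == c)%:R * h j = (c < m)%:R * h c.
Proof.
elim: m => [|m IH]; first by rewrite big_ord0 ltn0 mul0r.
rewrite big_ord_recr /= IH.
have [hc|hc|->] := ltngtP c m.
- by rewrite (ltn_trans hc (ltnSn m)) mul0r addr0.
- rewrite (_ : (c < m.+1)%N = false); last lia.
  by rewrite !mul0r addr0.
- by rewrite ltnSn mul0r add0r.
Qed.

(* The rung partner of vertex i (0-indexed): i xor 1. *)
Definition partner (i : nat) : nat := (2 * (i %/ 2) + (1 - i %% 2))%N.

Lemma ladder_adjE n (i j : 'I_(2 * n)) :
  ladder_adj i j = [|| (j : nat) == partner i, (j : nat).+2 == i | (j : nat) == i.+2].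
Proof.
have hi := ltn_ord i; have hj := ltn_ord j.
rewrite /ladder_adj /partner /is_pair; apply/existsP/idP.
- case=> k /=; have hk := ltn_ord k.
  case/or3P=> [|/andP[_]|/andP[_]] /orP[] /andP[/eqP h1 /eqP h2]; apply/or3P.
  + by apply: Or31; apply/eqP; lia.
  + by apply: Or31; apply/eqP; lia.
  + by apply: Or33; apply/eqP; lia.
  + by apply: Or32; apply/eqP; lia.
  + by apply: Or33; apply/eqP; lia.
  + by apply: Or32; apply/eqP; lia.
- case/or3P=> /eqP h.
  + have hk : (i %/ 2 < n)%N by lia.
    exists (Ordinal hk); apply/or3P; apply: Or31; apply/orP.
    have : (i %% 2 = 0 \/ i %% 2 = 1)%N by lia.
    case=> [he|ho]; [left | right]; apply/andP; split; apply/eqP => /=; lia.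
  + have hk : (j %/ 2 < n)%N by lia.
    exists (Ordinal hk); have : (j %% 2 = 0 \/ j %% 2 = 1)%N by lia.
    case=> [he|ho]; apply/or3P; [apply: Or32 | apply: Or33];
      apply/andP; (split; first by rewrite /=; lia);
      apply/orP; right; apply/andP; split; apply/eqP => /=; lia.
  + have hk : (i %/ 2 < n)%N by lia.
    exists (Ordinal hk); have : (i %% 2 = 0 \/ i %% 2 = 1)%N by lia.
    case=> [he|ho]; apply/or3P; [apply: Or32 | apply: Or33];
      apply/andP; (split; first by rewrite /=; lia);
      apply/orP; left; apply/andP; split; apply/eqP => /=; lia.
Qed.

Lemma ladder_adj_irr n (i : 'I_(2 * n)) : ladder_adj i i = false.
Proof. by rewrite ladder_adjE /partner; apply/negbTE/negP; case/or3P=> /eqP; lia. Qed.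

Lemma ladder_adj_sym n (i j : 'I_(2 * n)) : ladder_adj i j = ladder_adj j i.
Proof.
rewrite !ladder_adjE /partner; have hi := ltn_ord i; have hj := ltn_ord j.
by apply/idP/idP; case/or3P=> /eqP h; apply/or3P;
   first [apply: Or31; apply/eqP; lia | apply: Or32; apply/eqP; lia
         | apply: Or33; apply/eqP; lia].
Qed.

Lemma ladder_lap_row (R : numDomainType) n (x : 'cV[R]_(2 * n)) (i : 'I_(2 * n)) :
  (ladder_lap R n *m x) i 0 = \sum_j (ladder_adj i j)%:R * (x i 0 - x j 0).
Proof.
rewrite !mxE (bigD1 i) //= [RHS](bigD1 i) //= mxE eqxx ladder_adj_irr mul0r add0r.
have -> : #|[set k | ladder_adj i k]| = (\sum_j ladder_adj i j)%N.
  by rewrite -sum1_card big_mkcond; apply: eq_bigr => k _; rewrite inE; case: ladder_adj.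
rewrite natr_sum (bigD1 i) //= ladder_adj_irr add0r mulr_suml -big_split /=.
by apply: eq_bigr => j hj; rewrite mxE eq_sym (negbTE hj) mulrBr mulNr.
Qed.

Lemma ladder_neighbour_sum (R : numDomainType) n (i : 'I_(2 * n)) (h : nat -> R) :
  \sum_(j < 2 * n) (ladder_adj i j)%:R * h j =
  h (partner i) + (2 <= i)%:R * h (i - 2)%N + (i.+2 < 2 * n)%:R * h i.+2.
Proof.
have hi := ltn_ord i.
have hp : (partner i < 2 * n)%N by rewrite /partner; lia.
transitivity (\sum_(j < 2 * n) (((j : nat) == partner i)%:R * h j
   + (2 <= i)%:R * (((j : nat) == (i - 2)%N)%:R * h j)
   + ((j : nat) == i.+2)%:R * h j)).
  apply: eq_bigr => j _; rewrite ladder_adjE mulrA -natrM -!mulrDl; congr (_ * _).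
  have [e1|e1] := boolP ((j : nat) == partner i).
    have -> : ((j : nat) == i.+2) = false by move: e1; rewrite /partner => /eqP; lia.
    have -> : ((2 <= i) * ((j : nat) == (i - 2)))%N = 0%N.
      by move: e1; rewrite /partner => /eqP; lia.
    by rewrite /= !addr0.
  have [e2|e2] := boolP ((j : nat).+2 == i).
    have -> : ((j : nat) == i.+2) = false by move: e2 => /eqP; lia.
    have -> : ((2 <= i) * ((j : nat) == (i - 2)))%N = 1%N by move: e2 => /eqP; lia.
    by rewrite /= add0r addr0.
  have -> : ((2 <= i) * ((j : nat) == (i - 2)))%N = 0%N by move: e2 => /eqP; lia.
  by rewrite /= mulr0n !add0r.
rewrite !big_split /= -mulr_sumr !sum_delta hp mul1r.
have -> : (i - 2 < 2 * n)%N by lia.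
by rewrite mul1r.
Qed.

(* Summing z_i times
   the outflow at i gives the energy \sum_{i,j} e i j (z_i - z_j)^2 / 2. *)
Lemma harmonic_const_on_edges (R : realDomainType) m (e : rel 'I_m) (z : 'I_m -> R) :
  (forall i j, e i j = e j i) ->
  (forall i, \sum_j (e i j)%:R * (z i - z j) = 0) ->
  forall u v, e u v -> z u = z v.
Proof.
move=> e_sym hz u v huv.
have energy0 : \sum_i \sum_j (e i j)%:R * (z i - z j) ^+ 2 = 0.
  transitivity (\sum_i z i * \sum_j (e i j)%:R * (z i - z j)
     + \sum_i \sum_j (e i j)%:R * (z j * (z j - z i))).
    rewrite -big_split /=; apply: eq_bigr => i _.
    by rewrite mulr_sumr -big_split /=; apply: eq_bigr => j _; ring.
  rewrite big1 ?add0r => [|i _]; last by rewrite hz mulr0.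
  rewrite exchange_big /=; apply: big1 => j _.
  rewrite -[RHS](mulr0 (z j)) -{2}(hz j) mulr_sumr; apply: eq_bigr => i _.
  by rewrite e_sym mulrCA.
have term_ge0 i j : 0 <= (e i j)%:R * (z i - z j) ^+ 2.
  by rewrite mulr_ge0 ?ler0n ?sqr_ge0.
have row_ge0 i : true -> 0 <= \sum_j (e i j)%:R * (z i - z j) ^+ 2.
  by move=> _; apply: sumr_ge0 => j _.
have row0 := @psumr_eq0P _ _ _ _ row_ge0 energy0 u isT.
have := @psumr_eq0P _ _ _ _ (fun j _ => term_ge0 u j) row0 v isT.
by rewrite huv mul1r => /eqP; rewrite sqrf_eq0 subr_eq0 => /eqP.
Qed.

Lemma ladder_drop_unique (R : realDomainType) n (x y : 'cV[R]_(2 * n)) (u v : 'I_(2 * n)) :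
  ladder_adj u v -> ladder_lap R n *m x = ladder_lap R n *m y ->
  x u 0 - x v 0 = y u 0 - y v 0.
Proof.
move=> huv hxy.
have hz i : \sum_j (ladder_adj i j)%:R * ((x - y) i 0 - (x - y) j 0) = 0.
  by rewrite -ladder_lap_row mulmxBr hxy subrr mxE.
have := @harmonic_const_on_edges R _ _ (fun i => (x - y) i 0) (@ladder_adj_sym n) hz u v huv.
by rewrite !mxE => h; lra.
Qed.

Definition path_op (R : comRingType) (n : nat) (F : nat -> R) (m : nat) : R :=
  F m + F m + (1 <= m)%:R * (F m - F m.-1) + (m.+1 < n)%:R * (F m - F m.+1).

Lemma path_op_rev (R : comRingType) n (F : nat -> R) m : (m < n)%N ->
  path_op n (fun k => F (n.-1 - k)%N) m = path_op n F (n.-1 - m).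
Proof.
move=> hm; rewrite /path_op.
have -> : (1 <= n.-1 - m)%N = (m.+1 < n)%N by lia.
have -> : ((n.-1 - m).+1 < n)%N = (1 <= m)%N by lia.
have [h1|h1] := boolP (1 <= m)%N; have [h2|h2] := boolP (m.+1 < n)%N;
  rewrite /= ?mul0r ?addr0 ?mul1r //.
- have -> : (n.-1 - m.-1 = (n.-1 - m).+1)%N by lia.
  have -> : (n.-1 - m.+1 = (n.-1 - m).-1)%N by lia.
  ring.
- have -> : (n.-1 - m.-1 = (n.-1 - m).+1)%N by lia.
  ring.
- have -> : (n.-1 - m.+1 = (n.-1 - m).-1)%N by lia.
  ring.
Qed.

Lemma vertex_rung n (i : 'I_(2 * n)) :
  exists2 m, (m < n)%N & (i : nat) = (2 * m)%N \/ (i : nat) = (2 * m).+1.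
Proof. by exists (i %/ 2)%N; have := ltn_ord i; lia. Qed.

Definition side_value (R : numDomainType) (F : nat -> R) (k : nat) : R :=
  (if (k %% 2 == 1)%N then -1 else 1) * F (k %/ 2)%N.

Lemma side_value_left (R : numDomainType) (F : nat -> R) m : side_value F (2 * m) = F m.
Proof.
rewrite /side_value; have -> : ((2 * m) %% 2 = 0)%N by lia.
have -> : ((2 * m) %/ 2 = m)%N by lia.
by rewrite mul1r.
Qed.

Lemma side_value_right (R : numDomainType) (F : nat -> R) m :
  side_value F (2 * m).+1 = - F m.
Proof.
rewrite /side_value; have -> : ((2 * m).+1 %% 2 = 1)%N by lia.
have -> : ((2 * m).+1 %/ 2 = m)%N by lia.
by rewrite mulN1r.
Qed.

Definition rung_potential (R : numDomainType) (n : nat) (F : nat -> R) : 'cV[R]_(2 * n) :=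
  \col_i side_value F i.

(* The Laplacian of the lifted potential is the lift of [path_op]: the rung
   edge contributes 2 F m, the two side rails the path Laplacian. *)
Lemma lap_rung_potential (R : numDomainType) n (F : nat -> R) (i : 'I_(2 * n)) :
  (ladder_lap R n *m rung_potential n F) i 0 = side_value (path_op n F) i.
Proof.
rewrite ladder_lap_row.
under eq_bigr => k _ do rewrite !mxE.
rewrite (ladder_neighbour_sum i (fun k => side_value F i - side_value F k)).
have [m hm [hi|hi]] := vertex_rung i; rewrite /partner hi.
- have -> : (2 * ((2 * m) %/ 2) + (1 - (2 * m) %% 2) = (2 * m).+1)%N by lia.
  have -> : (2 * m - 2 = 2 * m.-1)%N by lia.
  have -> : ((2 * m).+2 = 2 * m.+1)%N by lia.
  have -> : (2 <= 2 * m)%N = (1 <= m)%N by lia.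
  have -> : (2 * m.+1 < 2 * n)%N = (m.+1 < n)%N by lia.
  by rewrite !side_value_left side_value_right /path_op opprK.
- have -> : (2 * ((2 * m).+1 %/ 2) + (1 - (2 * m).+1 %% 2) = 2 * m)%N by lia.
  have -> : ((2 * m).+3 = (2 * m.+1).+1)%N by lia.
  have -> : ((2 * m.+1).+1 < 2 * n)%N = (m.+1 < n)%N by lia.
  have below : (2 <= (2 * m).+1)%:R * (- F m - side_value F ((2 * m).+1 - 2))
             = (1 <= m)%:R * (- F m + F m.-1) :> R.
    case: m {hm hi} => [|m]; first by rewrite !mul0r.
    have -> : ((2 * m.+1).+1 - 2 = (2 * m).+1)%N by lia.
    by rewrite side_value_right opprK.
  rewrite !side_value_right side_value_left below /path_op; ring.
Qed.

Lemma rung_resistance (R : realDomainType) n c (F : nat -> R) (u v : 'I_(2 * n)) :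
  (forall m, (m < n)%N -> path_op n F m = (m == c)%:R) ->
  (u : nat) = (2 * c)%N -> (v : nat) = (2 * c).+1 ->
  ladder_resistance u v (F c + F c).
Proof.
move=> hF hu hv.
have hLX : ladder_lap R n *m rung_potential n F = evec R u - evec R v.
  apply/matrixP => i j; rewrite ord1 lap_rung_potential !mxE -!val_eqE /= hu hv.
  have [m hm [hi|hi]] := vertex_rung i; rewrite hi.
  - rewrite side_value_left hF //.
    have -> : ((2 * c).+1 == 2 * m)%N = false by apply/eqP; lia.
    by rewrite subr0; congr (_%:R); apply/eqP/eqP; lia.
  - rewrite side_value_right hF //.
    have -> : ((2 * c)%N == (2 * m).+1) = false by apply/eqP; lia.
    by rewrite sub0r; congr (- _%:R); apply/eqP/eqP; lia.
have huv : ladder_adj u v.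
  by rewrite ladder_adjE /partner hu hv; apply/or3P; apply: Or31; apply/eqP; lia.
split; first by exists (rung_potential n F).
move=> x hx; rewrite (ladder_drop_unique huv (etrans hx (esym hLX))).
by rewrite !mxE hu hv side_value_left side_value_right opprK.
Qed.

Section LadderSequence.
Variables (R : comRingType) (s : R).
Hypothesis s_sq : s ^+ 2 = 3.

(* Q k = (s+1) a^k + (s-1) b^k with a = 2+s, b = 2-s; a and b are the roots
   of t^2 = 4t - 1, so Q satisfies the interior recurrence of [path_op]. *)
Definition ladder_seq (k : nat) : R := (s + 1) * (2 + s) ^+ k + (s - 1) * (2 - s) ^+ k.

Lemma ladder_seq_rec k : ladder_seq k.+2 = 4 * ladder_seq k.+1 - ladder_seq k.
Proof. rewrite /ladder_seq !exprS; ring: s_sq. Qed.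

(* Boundary condition at the first rung: no current leaves rung 0. *)
Lemma ladder_seq_first : 3 * ladder_seq 0 - ladder_seq 1 = 0.
Proof. rewrite /ladder_seq !expr0 !expr1; ring: s_sq. Qed.

Lemma ladder_seq_last k :
  3 * ladder_seq k.+1 - ladder_seq k = 2 * ((2 + s) ^+ k.+2 - (2 - s) ^+ k.+2).
Proof. rewrite /ladder_seq !exprS; ring: s_sq. Qed.

Lemma ladder_seq_numer k :
  (2 + s) ^+ k.+1 * (s - 1) + (2 - s) ^+ k.+1 * (s + 1) = ladder_seq k.
Proof. rewrite /ladder_seq !exprS; ring: s_sq. Qed.

Lemma path_op_ladder_seq n m : (m < n)%N ->
  path_op n ladder_seq m = (m == n.-1)%:R * (2 * ((2 + s) ^+ n - (2 - s) ^+ n)).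
Proof.
rewrite /path_op; case: m => [|m] hm /=.
- have [n_le1|n_gt1] := leqP n 1%N.
  + have -> : n = 1%N by lia.
    by rewrite /ladder_seq /= !mul0r mul1r !addr0 !expr0 !expr1; ring.
  + have -> : (0 == n.-1)%N = false by apply/eqP; lia.
    by rewrite !mul0r mul1r addr0 -ladder_seq_first; ring.
- have [n_le|n_gt] := leqP n m.+2.
  + have -> : n = m.+2 by lia.
    by rewrite eqxx mul0r !mul1r addr0 -ladder_seq_last; ring.
  + have -> : (m.+1 == n.-1) = false by apply/eqP; lia.
    by rewrite mul0r !mul1r ladder_seq_rec; ring.
Qed.

End LadderSequence.

Lemma path_op_divr (R : fieldType) n (F : nat -> R) (c : R) m :
  path_op n (fun k => F k / c) m = path_op n F m / c.
Proof. rewrite /path_op; ring. Qed.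

Theorem mainTheorem4 (R : rcfType) (n : nat) (hn : (1 <= n)%N) :
  let s := Num.sqrt (3 : R) in
  let a := 2 + s in
  let b := 2 - s in
  let rho := (a ^+ n * (s - 1) + b ^+ n * (s + 1)) / (a ^+ n - b ^+ n) in
  (forall u v : 'I_(2 * n)%N, (u.+1 = 1)%N -> (v.+1 = 2)%N ->
     @ladder_resistance R n u v rho) /\
  (forall u v : 'I_(2 * n)%N, (u.+1 = (2 * n).-1)%N -> (v.+1 = 2 * n)%N ->
     @ladder_resistance R n u v rho).
Proof.
move=> s a b rho.
have s_ge0 : 0 <= s := sqrtr_ge0 3.
have s_sq : s ^+ 2 = 3 by rewrite sqr_sqrtr // ler0n.
have D_gt0 : 0 < a ^+ n - b ^+ n.
  by rewrite subr_gt0 ltrXn2r -?lt0n // /a /b; nra.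
pose G k := ladder_seq s k / (2 * (a ^+ n - b ^+ n)).
have hG m : (m < n)%N -> path_op n G m = (m == n.-1)%:R.
  move=> hm; rewrite path_op_divr (path_op_ladder_seq s_sq hm) mulfK //.
  by rewrite mulf_neq0 ?pnatr_eq0 ?lt0r_neq0.
have rhoE : rho = G n.-1 + G n.-1.
  rewrite /rho /G -(ladder_seq_numer s_sq) prednK //.
  by field; rewrite lt0r_neq0.
rewrite rhoE; split=> u v hu hv.
- have := @rung_resistance R n 0 (fun k => G (n.-1 - k)%N) u v; rewrite subn0; apply.
  + move=> m hm; rewrite path_op_rev // hG; last by lia.
    by congr (_%:R); apply/eqP/eqP; lia.
  + by lia.
  + by lia.
- by apply: rung_resistance => //; lia.
Qed.
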